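(* Consider the time-minimization problem $T\to\min$ for the control system on the upper half-plane $L^2=\{(x,y)\in\mathbb{R}^2: y>0\}$ $$\dot x = y u_1,\qquad \dot y = y u_2,\qquad u=(u_1,u_2)\in\Omega,$$ where $\Omega\subset\mathbb{R}^2$ is a convex compact set with $0\in\operatorname{int}\Omega$. Every geodesic (trajectory of an extremal given by the Pontryagin maximum principle for this problem) is of one of the following two types: (h) Horizontal geodesics: such a geodesic is obtained from the polar set $\Omega^\circ$ by (i) rotating $\Omega^\circ$ by $+90^\circ$ or $-90^\circ$ about the origin, (ii) stretching it by a factor $\lambda>0$, (iii) taking the part of the boundary of the resulting set lying in the upper half-plane, and (iv) translating this part horizontally by an arbitrary distance; the geodesic moves along (a piece of) this curve. If $\Omega^\circ$ was rotated clockwise then the motion along the geodesic is counterclockwise, and vice versa. (v) Vertical geodesics: a vertical geodesic moving up is obtained by choosing an arbitrary measurable control $u(t)\in\Omega$ such that, for a.e. $t$, $u(t)$ has the maximal possible $u_2$-coordinate among points of $\Omega$ (so $u_2$ is a constant); the corresponding geodesic starting at $(x_0,y_0)$ is $$x(t)=x_0+y_0\int_0^t e^{u_2 s}u_1(s)\,ds,\qquad y(t)=y_0e^{u_2 t}.$$ Vertical geodesics moving down are constructed in the same way, taking $u(t)\in\Omega$ with the minimal possible $u_2$-coordinate in $\Omega$ for all $t$.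
   Context: The polar set of $\Omega$ is $\Omega^\circ=\{(p,q)\in\mathbb{R}^2: px+qy\le 1 \text{ for all } (x,y)\in\Omega\}$. The problem defines a Finsler structure on $L^2$ in which the length of a tangent vector $(\xi,\eta)$ at $(x,y)$ is $y\,\mu_\Omega(\xi,\eta)$, $\mu_\Omega$ being the Minkowski gauge of $\Omega$. *)

(* Points of R^2 are pairs (R * R) with the
   product (= Euclidean) topology; time measure = Lebesgue measure on R. *)
From HB Require Import structures.
From mathcomp Require Import all_boot all_order all_algebra.
From mathcomp Require Import all_classical all_reals all_analysis.
Set Implicit Arguments. Unset Strict Implicit. Unset Printing Implicit Defensive.
Import Order.TTheory GRing.Theory Num.Theory.
Import numFieldNormedType.Exports.
Local Open Scope classical_set_scope.
Local Open Scope ring_scope.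

Section Defs.
Variable R : realType.
Local Notation mu := (@lebesgue_measure R).

Definition dotp (a b : R * R) : R := a.1 * b.1 + a.2 * b.2.
Definition cross (a b : R * R) : R := a.1 * b.2 - a.2 * b.1.

Definition convex2 (Om : set (R * R)) : Prop :=
  forall (a b : R * R) (t : R), Om a -> Om b -> 0 <= t <= 1 ->
    Om (t * a.1 + (1 - t) * b.1, t * a.2 + (1 - t) * b.2).

Definition polar_set (Om : set (R * R)) : set (R * R) :=
  [set p | forall w, Om w -> dotp p w <= 1].

Definition bd (A : set (R * R)) : set (R * R) := closure A `\` interior A.

(* rotation by s * 90 degrees about the origin: s = 1 counterclockwise (+90),
   s = -1 clockwise (-90) *)
Definition rot90 (s : R) (w : R * R) : R * R := (- (s * w.2), s * w.1).

(* Pontryagin extremal of the time-minimal problem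
     xdot = y u1, ydot = y u2, u in Om,
   on the time interval [0,T]: (x,y) is the trajectory (Caratheodory solution),
   u a measurable admissible control, (px, py t) the adjoint covector.
   Hamiltonian H = px y u1 + py y u2 ; adjoint equations
     pxdot = -dH/dx = 0 (so px is constant),
     pydot = -dH/dy = -(px u1 + py u2);
   maximum condition a.e., constant nonnegative value of max H
   (time-optimal problem: H = -psi0 >= 0), and psi(t) <> 0. *)
Definition pmp_extremal (Om : set (R * R)) (T : R) (x y : R -> R)
    (u : R -> R * R) (px : R) (py : R -> R) : Prop :=
  0 < T /\
  (forall t, `[0, T]%classic t -> 0 < y t) /\
  (forall t, `[0, T]%classic t -> Om (u t)) /\
  (measurable_fun `[0, T]%classic (fun t => (u t).1) /\
   measurable_fun `[0, T]%classic (fun t => (u t).2)) /\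
  (mu.-integrable `[0, T]%classic (fun s => (y s * (u s).1)%:E) /\
   mu.-integrable `[0, T]%classic (fun s => (y s * (u s).2)%:E) /\
   mu.-integrable `[0, T]%classic (fun s => (px * (u s).1 + py s * (u s).2)%:E)) /\
  (forall t, `[0, T]%classic t ->
     (x t)%:E = ((x 0)%:E + \int[mu]_(s in `[0%R, t]%classic) (y s * (u s).1)%:E)%E) /\
  (forall t, `[0, T]%classic t ->
     (y t)%:E = ((y 0)%:E + \int[mu]_(s in `[0%R, t]%classic) (y s * (u s).2)%:E)%E) /\
  (forall t, `[0, T]%classic t ->
     (py t)%:E = ((py 0)%:E -
       \int[mu]_(s in `[0%R, t]%classic) (px * (u s).1 + py s * (u s).2)%:E)%E) /\
  (forall t, `[0, T]%classic t -> (px, py t) <> (0, 0)) /\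
  exists h : R, 0 <= h /\
    {ae mu, forall t, `[0, T]%classic t ->
       (forall v, Om v -> y t * dotp (px, py t) v <= y t * dotp (px, py t) (u t))
       /\ y t * dotp (px, py t) (u t) = h}.

(* (h) horizontal geodesic: the trajectory lies on lam * rot_{s90}(bd Om°)
   translated horizontally by c, and moves clockwise if s = 1 (rotation by
   +90), counterclockwise if s = -1 (rotation by -90), around (c,0). *)
Definition horizontal_geodesic (Om : set (R * R)) (T : R) (x y : R -> R)
    (u : R -> R * R) : Prop :=
  exists s : R, (s = 1 \/ s = -1) /\
  exists lam c : R, 0 < lam /\
    (forall t, `[0, T]%classic t -> exists w, bd (polar_set Om) w /\
        (x t - c, y t) = (lam * (rot90 s w).1, lam * (rot90 s w).2)) /\
    {ae mu, forall t, `[0, T]%classic t ->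
        s * cross (x t - c, y t) (y t * (u t).1, y t * (u t).2) < 0}.

Definition vertical_up_geodesic (Om : set (R * R)) (T : R) (x y : R -> R)
    (u : R -> R * R) : Prop :=
  exists m : R, (forall v, Om v -> v.2 <= m) /\
    {ae mu, forall t, `[0, T]%classic t -> (u t).2 = m} /\
    (forall t, `[0, T]%classic t ->
       y t = y 0 * expR (m * t) /\
       (x t)%:E = ((x 0)%:E + (y 0)%:E *
                   \int[mu]_(s in `[0%R, t]%classic) (expR (m * s) * (u s).1)%:E)%E).

Definition vertical_down_geodesic (Om : set (R * R)) (T : R) (x y : R -> R)
    (u : R -> R * R) : Prop :=
  exists m : R, (forall v, Om v -> m <= v.2) /\
    {ae mu, forall t, `[0, T]%classic t -> (u t).2 = m} /\
    (forall t, `[0, T]%classic t ->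
       y t = y 0 * expR (m * t) /\
       (x t)%:E = ((x 0)%:E + (y 0)%:E *
                   \int[mu]_(s in `[0%R, t]%classic) (expR (m * s) * (u s).1)%:E)%E).

End Defs.

From HB Require Import structures.
From mathcomp Require Import all_boot all_order all_algebra.
From mathcomp Require Import all_classical all_reals all_analysis.
From mathcomp Require Import measurable_realfun ring lra.
Set Implicit Arguments. Unset Strict Implicit. Unset Printing Implicit Defensive.
Import Order.TTheory GRing.Theory Num.Theory.
Import numFieldNormedType.Exports.
Local Open Scope classical_set_scope.
Local Open Scope ring_scope.

(* Along an extremal px is constant, and the Hamiltonian y <(px, py), u> is
   a.e. a constant h, the maximum over Om of y <(px, py), v>; h > 0 because
   0 is interior to Om.  As y, py and t |-> y <(px, py), v> are Lipschitz
   (uniformly in v in Om), the maximum condition, known a.e., holds at every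
   time: h is y times the support function of Om at (px, py).
   If px = 0, py never vanishes and keeps its sign, so u2 is a.e. the largest
   (or smallest) second coordinate m on Om, and y' = m y gives y = y0 e^(m t).
   If px <> 0, px x + y py is a first integral, so (x - c, y) is
   (h / |px|) times the +-90 degree rotation of w = (y / h) (px, py), and w is on
   the boundary of the polar set because its support value max_Om <w, v> is 1. *)

Section RealAnalysis.
Variable R : realType.
Local Notation mu := (@lebesgue_measure R).
Implicit Types (a b c s t z C K L M T : R) (F f : R -> R) (A : set R).

Lemma klipschitz_continuous_within A K F :
  K.-lipschitz_A F -> {within A, continuous F}.
Proof.
move=> FK; apply/subspace_continuousP => a Aa.
apply/cvgrPdist_le => e e0; rewrite near_withinE /=.
have K1 : 0 < `|K| + 1 by rewrite ltr_pwDr.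
apply/nbhs_ballP; exists (e / (`|K| + 1)) => /=; first by rewrite divr_gt0.
move=> b /= ab Ab.
apply: (le_trans (FK (a, b) (conj Aa Ab))).
apply: (le_trans (ler_wpM2r _ (ler_norm K))) => //.
apply: (le_trans (ler_wpM2l _ (ltW ab))) => //.
by rewrite mulrA ler_pdivrMr // mulrC ler_wpM2l ?ltW // ltrDl.
Qed.

Lemma klipschitz_lt A K F s t e : 0 <= K -> 0 < e -> K.-lipschitz_A F ->
  A s -> A t -> `|s - t| < e / (K + 1) -> `|F s - F t| < e.
Proof.
move=> K0 e0 FK As At st; apply: le_lt_trans (FK (s, t) (conj As At)) _ => /=.
have K1 : 0 < K + 1 by rewrite ltr_pwDr.
move: st; rewrite ltr_pdivlMr // => st.
have := normr_ge0 (s - t); nra.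
Qed.

Lemma within_continuousM A F (G : R -> R) :
  {within A, continuous F} -> {within A, continuous G} ->
  {within A, continuous (fun t => F t * G t)}.
Proof. by move=> cF cG t; apply: cvgM; [exact: cF | exact: cG]. Qed.

Lemma continuous_itv_gt0 a b F : {within `[a, b], continuous F} ->
  (forall t, a <= t -> t <= b -> F t != 0) -> 0 < F a ->
  forall t, a <= t -> t <= b -> 0 < F t.
Proof.
move=> cF F0 Fa t le_at le_tb; rewrite ltNge; apply/negP => Ft.
have cFt : {within `[a, t], continuous F}.
  by apply: continuous_subspaceW cF; apply: subset_itvl; rewrite bnd_simp.
have := @IVT _ F a t 0 le_at cFt.
rewrite ge_min le_max Ft (ltW Fa) orbT => /(_ isT) [c].
rewrite in_itv /= => /andP[ac ct] /eqP; apply/negP/F0 => //.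
exact: le_trans le_tb.
Qed.

Lemma is_derive_sqr_remainder a b s L K F : a < s -> s < b -> 0 <= K ->
  (forall t, a <= t -> t <= b -> `|F t - F s - L * (t - s)| <= K * (t - s) ^+ 2) ->
  is_derive s 1 F L.
Proof.
move=> as_ sb K0 FK.
suff FL : (fun h => h^-1 *: ((F \o shift s) (h *: 1) - F s)) @ 0^' --> L.
  by split; [apply/cvg_ex; exists L | exact: cvg_lim].
apply/cvgrPdist_le => e e0; rewrite near_withinE /=.
have K1 : 0 < K + 1 by rewrite ltr_pwDr.
apply/nbhs_ballP.
exists (Num.min (Num.min (s - a) (b - s)) (e / (K + 1))) => /=.
  by rewrite !lt_min !subr_gt0 as_ sb divr_gt0.
move=> h; rewrite /ball /= sub0r normrN !lt_min => /andP[/andP[hsa hbs] he] h0.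
rewrite [h *: 1]mulr1 /GRing.scale /=.
have := FK (h + s); rewrite addrK.
have h1 := ler_norm h; have h2 : - h <= `|h| by rewrite -normrN ler_norm.
move=> /(_ ltac:(lra) ltac:(lra)) Fh.
have -> : L - h^-1 * (F (h + s) - F s) = - h^-1 * (F (h + s) - F s - L * h).
  by field.
rewrite normrM normrN normfV ler_pdivrMl ?normr_gt0 //.
apply: (le_trans Fh); rewrite -real_normK ?num_real //.
move: he; rewrite ltr_pdivlMr // => he.
have := normr_ge0 h; set n := `|h| in he *; nra.
Qed.

Lemma sqr_increment_cst a b K F : a <= b -> 0 <= K ->
  (forall s t, a <= s -> s <= t -> t <= b -> `|F t - F s| <= K * (t - s) ^+ 2) ->
  F b = F a.
Proof.
move=> ab K0 FK.
have FK' s t : a <= s -> s <= b -> a <= t -> t <= b ->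
    `|F s - F t| <= K * (s - t) ^+ 2.
  move=> sa sb ta tb; have [st|/ltW ts] := leP s t; last exact: FK.
  by rewrite distrC -sqrrN opprB FK.
have dF z : z \in `]a, b[ -> is_derive z 1 F 0.
  rewrite in_itv /= => /andP[az zb].
  apply: (is_derive_sqr_remainder az zb K0) => t le_at le_tb.
  by rewrite mul0r subr0; apply: FK'; lra.
have cF : {within `[a, b], continuous F}.
  apply: (@klipschitz_continuous_within _ (K * (b - a))) => -[s t] /= [].
  rewrite !in_itv /= => /andP[sa sb] /andP[ta tb].
  apply: (le_trans (FK' s t sa sb ta tb)).
  rewrite -mulrA ler_wpM2l // -real_normK ?num_real // expr2 ler_wpM2r //.
  by rewrite ler_norml; apply/andP; split; lra.
have [c _] := MVT_segment ab dF cF.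
by rewrite mul0r => /eqP; rewrite subr_eq0 => /eqP.
Qed.

Lemma ae_itv_dense a b (P : R -> Prop) : a < b ->
  {ae mu, forall t, `[a, b]%classic t -> P t} ->
  forall t d, a <= t -> t <= b -> 0 < d ->
  exists t', [/\ a <= t', t' <= b, `|t' - t| < d & P t'].
Proof.
move=> ab [N [mN N0 PN]] t d le_at le_tb d0.
apply: contrapT => noP.
pose c := Num.max a (t - d); pose e := Num.min b (t + d).
have ce : c < e.
  by rewrite /c /e gt_max !lt_min; apply/andP; split; apply/andP; split; lra.
have sN : `]c, e[%classic `<=` N.
  move=> r /=; rewrite in_itv /= gt_max lt_min.
  move=> /andP[/andP[ar tdr] /andP[rb rtd]]; apply: PN => Pr; apply: noP.
  exists r; split; [lra | lra | rewrite ltr_norml; apply/andP; split; lra |].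
  by apply: Pr; rewrite /= in_itv /= !ltW.
have := le_measure mu (mem_set (measurable_itv `]c, e[)) (mem_set mN) sN.
set muI := (X in (X <= _)%E -> _); set muN := (X in (_ <= X)%E -> _).
have -> : muN = 0%E by exact: N0.
have -> : muI = (e - c)%:E.
  by have := @lebesgue_measure_itv R `]c, e[; rewrite /= lte_fin ce -EFinD.
by rewrite lee_fin; lra.
Qed.

Lemma integrable_itv_oc_cst a b c : mu.-integrable `]a, b] (EFin \o cst c).
Proof.
apply: (@integrableS _ _ _ mu `[a, b]) => //; first exact: subset_itv_oc_cc.
apply: continuous_compact_integrable; first exact: segment_compact.
exact/continuous_subspaceT/cst_continuous.
Qed.

Lemma Rintegral_itv_oc_cst a b c : a <= b ->
  \int[mu]_(s in `]a, b]) c = c * (b - a).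
Proof.
move=> ab; have muab : mu `]a, b]%classic = (b - a)%:E.
  rewrite lebesgue_measure_itv /= lte_fin.
  have [_|ba] := ltP a b; first by rewrite EFinB.
  have -> : b = a by apply/eqP; rewrite eq_le ab ba.
  by rewrite subrr.
by rewrite Rintegral_cst //; move: muab; rewrite /= => ->.
Qed.

Lemma le_normr_Rintegral_itv_oc a b C f : a <= b ->
  mu.-integrable `]a, b] (EFin \o f) ->
  (forall s, a < s -> s <= b -> `|f s| <= C) ->
  `|\int[mu]_(s in `]a, b]) f s| <= C * (b - a).
Proof.
move=> ab fi fC; apply: (le_trans (le_normr_Rintegral _ fi)) => //.
rewrite -Rintegral_itv_oc_cst //; apply: le_Rintegral => //.
- exact: integrable_norm.
- exact: integrable_itv_oc_cst.
- by move=> s; rewrite /= in_itv /= => /andP[]; exact: fC.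
Qed.

Lemma integral_itv0_EFin T f t : mu.-integrable `[0, T] (EFin \o f) ->
  `[0, T]%classic t ->
  (\int[mu]_(s in `[0%R, t]%classic) (f s)%:E)%E = (\int[mu]_(s in `[0, t]) f s)%:E.
Proof.
move=> f_int; rewrite /= in_itv /= => /andP[t0 tT].
have f_int_t : mu.-integrable `[0, t] (EFin \o f).
  by apply: integrableS f_int => //; apply: subset_itvl; rewrite bnd_simp.
by rewrite /Rintegral fineK // integrable_fin_num.
Qed.

Section Primitive.
Variables (T : R) (F f : R -> R).
Hypothesis f_int : mu.-integrable `[0, T] (EFin \o f).
Hypothesis F_eq :
  forall t, `[0, T]%classic t -> F t = F 0 + \int[mu]_(s in `[0, t]) f s.

Lemma integrable_itv_oc_sub a b : 0 <= a -> b <= T ->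
  mu.-integrable `]a, b] (EFin \o f).
Proof.
move=> a0 bT; apply: integrableS f_int => // s /=; rewrite !in_itv /=.
by move=> /andP[as_ sb]; rewrite (le_trans a0 (ltW as_)) (le_trans sb bT).
Qed.

Lemma primitive_increment a b : 0 <= a -> a <= b -> b <= T ->
  F b - F a = \int[mu]_(s in `]a, b]) f s.
Proof.
move=> a0 ab bT.
have aI : `[0, T]%classic a by rewrite /= in_itv /= a0 (le_trans ab bT).
have bI : `[0, T]%classic b by rewrite /= in_itv /= (le_trans a0 ab) bT.
rewrite (F_eq bI) (F_eq aI) opprD addrACA subrr add0r.
apply: (@Rintegral_itvB R f (BLeft 0) (BRight b) a).
- by apply: integrableS f_int => //; apply: subset_itvl; rewrite bnd_simp.
- by rewrite bnd_simp.
- by rewrite bnd_simp.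
Qed.

Lemma primitive_bounded : exists M, forall t, `[0, T]%classic t -> `|F t| <= M.
Proof.
exists (`|F 0| + \int[mu]_(s in `[0, T]) `|f s|) => t It.
rewrite F_eq //; apply: (le_trans (ler_normD _ _)); rewrite lerD2l.
move: It; rewrite /= in_itv /= => /andP[t0 tT].
have sub : `[0, t]%classic `<=` `[0, T]%classic.
  by apply: subset_itvl; rewrite bnd_simp.
have f_int_t : mu.-integrable `[0, t] (EFin \o f) by apply: integrableS f_int.
apply: (le_trans (le_normr_Rintegral _ f_int_t)) => //.
have /integrableP[mf fT] := f_int.
have le_tT : (\int[mu]_(s in `[0%R, t]%classic) (`|f s|)%:E <=
              \int[mu]_(s in `[0%R, T]%classic) (`|f s|)%:E)%E.
  apply: ge0_subset_integral => //.
  by apply/measurable_EFinP; apply: measurableT_comp => //; exact/measurable_EFinP.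
rewrite /Rintegral; apply: fine_le => //; rewrite ge0_fin_numE;
  do ?[exact: le_lt_trans le_tT fT | exact: fT];
  by apply: integral_ge0 => s _; rewrite lee_fin.
Qed.

Lemma primitive_klipschitz C : (forall t, `[0, T]%classic t -> `|f t| <= C) ->
  C.-lipschitz_(`[0, T]) F.
Proof.
move=> fC.
have incr a b : 0 <= a -> a <= b -> b <= T -> `|F b - F a| <= C * (b - a).
  move=> a0 ab bT; rewrite primitive_increment //.
  apply: le_normr_Rintegral_itv_oc => //; first exact: integrable_itv_oc_sub.
  move=> s as_ sb; apply: fC.
  by rewrite /= in_itv /= (le_trans a0 (ltW as_)) (le_trans sb bT).
move=> -[a b] /= []; rewrite !in_itv /= => /andP[a0 aT] /andP[b0 bT].
have [ab|/ltW ba] := leP a b.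
  by rewrite distrC (distrC a) [`|b - a|]ger0_norm ?subr_ge0 //; exact: incr.
by rewrite [`|a - b|]ger0_norm ?subr_ge0 //; exact: incr.
Qed.

Lemma primitive_is_derive K z : 0 <= K -> K.-lipschitz_(`[0, T]) f ->
  0 < z -> z < T -> is_derive z 1 F (f z).
Proof.
move=> K0 fK z0 zT.
have rem a b w : 0 <= a -> a <= w -> w <= b -> b <= T ->
    `|F b - F a - f w * (b - a)| <= K * (b - a) ^+ 2.
  move=> a0 aw wb bT; have ab := le_trans aw wb.
  rewrite primitive_increment // -(Rintegral_itv_oc_cst (f w) ab).
  rewrite -RintegralB //; last exact: integrable_itv_oc_cst.
    2: exact: integrable_itv_oc_sub.
  rewrite expr2 mulrA; apply: le_normr_Rintegral_itv_oc => //.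
    exact: integrableB (integrable_itv_oc_sub a0 bT) (integrable_itv_oc_cst _ _ _).
  move=> s as_ sb.
  have sI : `[0, T]%classic s.
    by rewrite /= in_itv /= (le_trans a0 (ltW as_)) (le_trans sb bT).
  have wI : `[0, T]%classic w.
    by rewrite /= in_itv /= (le_trans a0 aw) (le_trans wb bT).
  apply: (le_trans (fK (s, w) (conj sI wI))); rewrite /= ler_wpM2l //.
  by rewrite ler_norml; apply/andP; split; lra.
apply: (is_derive_sqr_remainder z0 zT K0) => t t0 tT.
have [zt|tz] := leP z t; first exact: rem (ltW z0) (lexx z) zt tT.
have -> : F t - F z - f z * (t - z) = - (F z - F t - f z * (z - t)) by ring.
by rewrite normrN -sqrrN opprB; exact: rem t0 (ltW tz) (lexx z) (ltW zT).
Qed.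

End Primitive.

Lemma primitive_expR T K m F : 0 <= K -> K.-lipschitz_(`[0, T]) F ->
  (forall t, `[0, T]%classic t -> F t = F 0 + \int[mu]_(s in `[0, t]) (m * F s)) ->
  forall t, `[0, T]%classic t -> F t = F 0 * expR (m * t).
Proof.
move=> K0 FK F_eq.
have mFK : (`|m| * K).-lipschitz_(`[0, T]) (fun s => m * F s).
  move=> [a b] Iab /=; rewrite -mulrBr normrM -mulrA ler_wpM2l //.
  exact: FK (a, b) Iab.
have mF_int : mu.-integrable `[0, T] (EFin \o (fun s => m * F s)).
  apply: continuous_compact_integrable; first exact: segment_compact.
  exact: klipschitz_continuous_within mFK.
have dF z : 0 < z -> z < T -> is_derive z 1 F (m * F z).
  by apply: (primitive_is_derive mF_int F_eq _ mFK); rewrite mulr_ge0.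
have dexp k z : is_derive z 1 (fun s => expR (k * s)) (expR (k * z) * k).
  have kid := is_deriveZ k (is_derive_id z (1 : R)).
  have ek := @is_derive1_comp R expR (k \*: id) z _ _ (is_derive_expR _) kid.
  have -> : (fun s => expR (k * s)) = expR \o (k \*: id) by [].
  by apply: is_derive_eq ek _; rewrite /= /GRing.scale /= mulr1.
move=> t; rewrite /= in_itv /= => /andP[t0 tT].
pose Z s := F s * expR (- m * s).
have dZ s : s \in `]0, t[ -> is_derive s 1 Z 0.
  rewrite in_itv /= => /andP[s0 st].
  have dFe := is_deriveM (dF s s0 (lt_le_trans st tT)) (dexp (- m) s).
  by apply: is_derive_eq dFe _; rewrite /GRing.scale /=; ring.
have cZ : {within `[0, t], continuous Z}.
  apply: within_continuousM.
    apply: continuous_subspaceW (klipschitz_continuous_within FK).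
    by apply: subset_itvl; rewrite bnd_simp.
  apply: continuous_subspaceT => s.
  by apply: continuous_comp; [exact: mulrl_continuous | exact: continuous_expR].
have [c _] := MVT_segment t0 dZ cZ.
rewrite mul0r => /eqP; rewrite subr_eq0 /Z mulr0 expR0 mulr1 => /eqP <-.
by rewrite -mulrA -expRD mulNr addNr expR0 mulr1.
Qed.

End RealAnalysis.

Section PlaneGeometry.
Variable R : realType.
Implicit Types (Om : set (R * R)) (p v : R * R) (c e : R).

Lemma compact_coord_bounded Om : compact Om ->
  exists M, forall v, Om v -> `|v.1| <= M /\ `|v.2| <= M.
Proof.
move=> /compact_bounded [M [Mreal OmM]]; exists (`|M| + 1) => v.
have /OmM OmM1 : M < `|M| + 1.
  by apply: le_lt_trans (real_ler_norm Mreal) _; rewrite ltrDl.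
by move=> /OmM1 /=; rewrite prod_normE /= ge_max => /andP[-> ->].
Qed.

Lemma dotpZl c p v : dotp (c *: p) v = c * dotp p v.
Proof. by rewrite /dotp /= /GRing.scale /=; ring. Qed.

Lemma dotpZr c p v : dotp p (c *: v) = c * dotp p v.
Proof. by rewrite /dotp /= /GRing.scale /=; ring. Qed.

Lemma normr_shrink_lt e p : 0 < e -> `|(e / (`|p| + 1)) *: p| < e.
Proof.
move=> e0; have p1 : 0 < `|p| + 1 by rewrite ltr_pwDr.
rewrite normrZ gtr0_norm ?divr_gt0 // mulrAC ltr_pdivrMr //.
by rewrite ltr_pM2l // ltrDl.
Qed.

Lemma interior0_dotp_gt0 Om p : interior Om (0, 0) -> p <> (0, 0) ->
  exists2 v, Om v & 0 < dotp p v.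
Proof.
move=> /nbhs_ballP [r /= r0 Or] p0.
have p1 : 0 < `|p| + 1 by rewrite ltr_pwDr.
exists ((r / (`|p| + 1)) *: p).
  apply: Or; rewrite -ball_normE /ball_ /=.
  by rewrite -[(0, 0)]/(0 : R * R) sub0r normrN normr_shrink_lt.
rewrite dotpZr mulr_gt0 ?divr_gt0 // /dotp -!expr2.
rewrite lt_neqAle addr_ge0 ?sqr_ge0 // andbT eq_sym paddr_eq0 ?sqr_ge0 //.
rewrite !sqrf_eq0; apply/negP => /andP[/eqP p_1 /eqP p_2]; apply: p0.
by case: p p_1 p_2 {p1} => /= ? ? -> ->.
Qed.

Lemma polar_set_bd Om p : (forall v, Om v -> dotp p v <= 1) ->
  (forall q, q < 1 -> exists2 v, Om v & q < dotp p v) ->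
  bd (polar_set Om) p.
Proof.
move=> le1 sup1; split; first exact: subset_closure.
move=> /nbhs_ballP [e /= e0 Pe].
pose k := e / (`|p| + 1).
have k1 : 0 < 1 + k by rewrite addr_gt0 // divr_gt0 // ltr_pwDr.
have /= Pk : polar_set Om ((1 + k) *: p).
  apply: Pe; rewrite -ball_normE /ball_ /=.
  by rewrite scalerDl scale1r opprD addrA subrr add0r normrN normr_shrink_lt.
have k1' : (1 + k)^-1 < 1 by rewrite invf_lt1 // ltrDl divr_gt0 // ltr_pwDr.
have [v Ov qv] := sup1 _ k1'.
have := Pk v Ov; rewrite dotpZl -ler_pdivlMl // mulr1 => le_v.
by have := lt_le_trans qv le_v; rewrite ltxx.
Qed.

End PlaneGeometry.

Section Extremal.
Variables (R : realType) (Om : set (R * R)) (T : R) (x y : R -> R).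
Variables (u : R -> R * R) (px : R) (py : R -> R) (h : R).
Local Notation mu := (@lebesgue_measure R).
Local Notation J := `[0, T]%classic.
Local Notation hamiltonian v t := (y t * dotp (px, py t) v).

Hypothesis Om_compact : compact Om.
Hypothesis Om_interior0 : interior Om (0, 0).
Hypothesis T_gt0 : 0 < T.
Hypothesis y_gt0 : forall t, J t -> 0 < y t.
Hypothesis u_in : forall t, J t -> Om (u t).
Hypothesis xdot_int : mu.-integrable J (fun s => (y s * (u s).1)%:E).
Hypothesis ydot_int : mu.-integrable J (fun s => (y s * (u s).2)%:E).
Hypothesis pydot_int :
  mu.-integrable J (fun s => (px * (u s).1 + py s * (u s).2)%:E).
Hypothesis x_eq : forall t, J t ->
  (x t)%:E = ((x 0)%:E + \int[mu]_(s in `[0%R, t]%classic) (y s * (u s).1)%:E)%E.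
Hypothesis y_eq : forall t, J t ->
  (y t)%:E = ((y 0)%:E + \int[mu]_(s in `[0%R, t]%classic) (y s * (u s).2)%:E)%E.
Hypothesis py_eq : forall t, J t ->
  (py t)%:E = ((py 0)%:E -
    \int[mu]_(s in `[0%R, t]%classic) (px * (u s).1 + py s * (u s).2)%:E)%E.
Hypothesis p_neq0 : forall t, J t -> (px, py t) <> (0, 0).
Hypothesis hamiltonian_max : {ae mu, forall t, J t ->
  (forall v, Om v -> hamiltonian v t <= hamiltonian (u t) t) /\
  hamiltonian (u t) t = h}.

Lemma mem_itv0T t : 0 <= t -> t <= T -> J t.
Proof. by move=> t0 tT; rewrite /= in_itv /= t0 tT. Qed.

Let J0 : J 0 := mem_itv0T (lexx 0) (ltW T_gt0).

Lemma x_primitive t : J t ->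
  x t = x 0 + \int[mu]_(s in `[0, t]) (y s * (u s).1).
Proof.
by move=> Jt; have := x_eq Jt; rewrite (integral_itv0_EFin xdot_int Jt) -EFinD => -[].
Qed.

Lemma y_primitive t : J t ->
  y t = y 0 + \int[mu]_(s in `[0, t]) (y s * (u s).2).
Proof.
by move=> Jt; have := y_eq Jt; rewrite (integral_itv0_EFin ydot_int Jt) -EFinD => -[].
Qed.

Lemma Npy_primitive t : J t ->
  - py t = - py 0 + \int[mu]_(s in `[0, t]) (px * (u s).1 + py s * (u s).2).
Proof.
move=> Jt; have := py_eq Jt; rewrite (integral_itv0_EFin pydot_int Jt) -EFinB.
by move=> -[->]; ring.
Qed.

Lemma extremal_bounded : exists M, [/\ 0 <= M,
  forall v, Om v -> `|v.1| <= M /\ `|v.2| <= M &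
  forall t, J t -> `|y t| <= M /\ `|py t| <= M].
Proof.
have [My yM] := primitive_bounded ydot_int y_primitive.
have [Mp pM] := primitive_bounded pydot_int Npy_primitive.
have [Mo OmM] := compact_coord_bounded Om_compact.
exists (Num.max My (Num.max Mp Mo)); split.
- by rewrite le_max (le_trans (normr_ge0 _) (yM 0 J0)).
- by move=> v /OmM[v1 v2]; rewrite !le_max v1 v2 !orbT.
- move=> t Jt; split; first by rewrite le_max yM.
  by rewrite !le_max -normrN pM ?orbT.
Qed.

Lemma extremal_rates_bounded : exists C, forall t, J t ->
  `|y t * (u t).2| <= C /\ `|px * (u t).1 + py t * (u t).2| <= C.
Proof.
have [M [M0 OmM yM]] := extremal_bounded.
exists ((`|px| + M) * M) => t Jt.
have [u1 u2] := OmM _ (u_in Jt); have [yt pyt] := yM t Jt; split.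
  by rewrite normrM ler_pM // (le_trans yt) // lerDr.
apply: (le_trans (ler_normD _ _)); rewrite !normrM mulrDl.
by apply: lerD; apply: ler_pM.
Qed.

Lemma extremal_klipschitz :
  exists K, [/\ 0 <= K, K.-lipschitz_J y & K.-lipschitz_J py].
Proof.
have [C rC] := extremal_rates_bounded.
exists C; split; first exact: le_trans (normr_ge0 _) (proj1 (rC 0 J0)).
  by apply: (primitive_klipschitz ydot_int y_primitive) => t /rC[].
have Npy_lip : C.-lipschitz_J (fun t => - py t).
  by apply: (primitive_klipschitz pydot_int Npy_primitive) => t /rC[].
by move=> [a b] Jab; have := Npy_lip (a, b) Jab; rewrite /= -opprD normrN.
Qed.

Lemma hamiltonian_max_dense t d : J t -> 0 < d ->
  exists t', [/\ J t', `|t' - t| < d,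
    forall v, Om v -> hamiltonian v t' <= h & hamiltonian (u t') t' = h].
Proof.
rewrite /= in_itv /= => /andP[t0 tT] d0.
have [t' [t'0 t'T tt' Pt']] := ae_itv_dense T_gt0 hamiltonian_max t0 tT d0.
have Jt' := mem_itv0T t'0 t'T; have [Hle Ht'] := Pt'.
by exists t'; split => //; rewrite -Ht'.
Qed.

Lemma hamiltonian_gt0 : 0 < h.
Proof.
have [t [Jt _ Hle _]] := hamiltonian_max_dense J0 ltr01.
have [v Ov pv] := interior0_dotp_gt0 Om_interior0 (p_neq0 Jt).
exact: lt_le_trans (mulr_gt0 (y_gt0 Jt) pv) (Hle v Ov).
Qed.

Lemma py_sign_const : px = 0 ->
  (forall t, J t -> 0 < py t) \/ (forall t, J t -> 0 < - py t).
Proof.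
move=> px0; have [K [_ _ py_lip]] := extremal_klipschitz.
have py_cont := klipschitz_continuous_within py_lip.
have py_neq0 t : 0 <= t -> t <= T -> py t != 0.
  move=> t0 tT; apply/eqP => pyt.
  by apply: (p_neq0 (mem_itv0T t0 tT)); rewrite px0 pyt.
have [py0|py0] := ltP 0 (py 0); [left | right] => t;
  rewrite /= in_itv /= => /andP[t0 tT].
  exact: (@continuous_itv_gt0 _ 0 T py py_cont py_neq0 py0 t t0 tT).
apply: (@continuous_itv_gt0 _ 0 T (fun t => - py t)) => //.
- by move=> s; apply: cvgN; exact: py_cont.
- by move=> s s0 sT; rewrite oppr_eq0 py_neq0.
- by rewrite oppr_gt0 lt_neqAle py0 py_neq0 // ltW.
Qed.

Lemma u2_ae_extremal sg : px = 0 -> (forall t, J t -> 0 < sg * py t) ->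
  exists m, (forall v, Om v -> sg * v.2 <= sg * m) /\
    {ae mu, forall t, J t -> (u t).2 = m}.
Proof.
move=> px0 sg_py.
have sg0 : sg != 0.
  by apply: contraTneq (sg_py _ J0) => ->; rewrite mul0r ltxx.
have sg_le t v w : J t -> hamiltonian v t <= hamiltonian w t ->
    sg * v.2 <= sg * w.2.
  move=> Jt; rewrite /dotp px0 !mul0r !add0r ler_pM2l ?y_gt0 // => le_vw.
  have sp := sg_py t Jt.
  have py0 : py t != 0 by apply: contraTneq sp => ->; rewrite mulr0 ltxx.
  have py2 : 0 < py t ^+ 2 by rewrite lt_neqAle sqr_ge0 andbT eq_sym sqrf_eq0.
  rewrite -(ler_pM2l py2).
  have E z : py t ^+ 2 * (sg * z) = (sg * py t) * (py t * z) by ring.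
  by rewrite !E ler_pM2l.
have [t0 [Jt0 _ Hle0 Ht0]] := hamiltonian_max_dense J0 ltr01.
exists (u t0).2; split.
  by move=> v Ov; apply: (sg_le t0) => //; rewrite Ht0; exact: Hle0.
apply: (@filterS _ _ (ae_filter_ringOfSetsType mu) _ _ _ hamiltonian_max).
move=> t Ht Jt; have [Hle _] := Ht Jt.
apply: (mulfI sg0); apply/eqP; rewrite eq_le.
rewrite (sg_le t (u t0) (u t) Jt (Hle _ (u_in Jt0))) andbT.
by apply: (sg_le t0) => //; rewrite Ht0; apply: Hle0; exact: u_in.
Qed.

Lemma vertical_of_u2_ae_cst m : {ae mu, forall t, J t -> (u t).2 = m} ->
  forall t, J t -> y t = y 0 * expR (m * t) /\
    (x t)%:E = ((x 0)%:E + (y 0)%:E *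
      \int[mu]_(s in `[0%R, t]%classic) (expR (m * s) * (u s).1)%:E)%E.
Proof.
move=> u2m.
have [K [K0 y_lip _]] := extremal_klipschitz.
have my_int : mu.-integrable J (EFin \o (fun s => m * y s)).
  apply: continuous_compact_integrable; first exact: segment_compact.
  apply: (klipschitz_continuous_within (K := `|m| * K)) => -[a b] Jab /=.
  by rewrite -mulrBr normrM -mulrA ler_wpM2l // (y_lip (a, b) Jab).
have y_exp : forall t, J t -> y t = y 0 * expR (m * t).
  apply: (primitive_expR K0 y_lip) => t Jt; rewrite y_primitive //.
  congr (_ + _); move: Jt; rewrite /= in_itv /= => /andP[t0 tT].
  have sub : `[0, t]%classic `<=` J by apply: subset_itvl; rewrite bnd_simp.
  rewrite /Rintegral; congr fine; apply: ae_eq_integral => //.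
  - have : mu.-integrable `[0, t] (fun s => (y s * (u s).2)%:E).
      exact: integrableS ydot_int.
    by move/measurable_int.
  - have : mu.-integrable `[0, t] (EFin \o (fun s => m * y s)).
      exact: integrableS my_int.
    by move/measurable_int.
  apply: (@filterS _ _ (ae_filter_ringOfSetsType mu) _ _ _ u2m).
  move=> s u2s Js; rewrite /= u2s; [by rewrite mulrC | exact: sub].
move=> t Jt; split; first exact: y_exp.
rewrite x_eq //; congr (_ + _)%E.
have y0 := y_gt0 J0.
move: Jt; rewrite /= in_itv /= => /andP[t0 tT].
have xdot_int_t : mu.-integrable `[0, t] (fun s => (y s * (u s).1)%:E).
  by apply: integrableS xdot_int => //; apply: subset_itvl; rewrite bnd_simp.
transitivity ((y 0)%:E * ((y 0)^-1%:E *
    \int[mu]_(s in `[0%R, t]%classic) (y s * (u s).1)%:E))%E.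
  by rewrite muleA -EFinM mulfV ?gt_eqF // mul1e.
congr (_ * _)%E; rewrite -integralZl //.
apply: eq_integral => s; rewrite inE /= in_itv /= => /andP[s0 st].
have Js : J s by apply: mem_itv0T s0 _; exact: le_trans st tT.
rewrite -EFinM (y_exp s Js).
by congr EFin; rewrite !mulrA mulVf ?gt_eqF // mul1r.
Qed.

Lemma vertical_of_px0 : px = 0 ->
  vertical_up_geodesic Om T x y u \/ vertical_down_geodesic Om T x y u.
Proof.
move=> px0; have [py_pos|py_neg] := py_sign_const px0.
  have [m [m_max u2m]] : exists m, (forall v, Om v -> 1 * v.2 <= 1 * m) /\
      {ae mu, forall t, J t -> (u t).2 = m}.
    by apply: u2_ae_extremal => // t Jt; rewrite mul1r py_pos.
  left; exists m; split; first by move=> v /m_max; rewrite !mul1r.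
  by split => //; exact: vertical_of_u2_ae_cst.
have [m [m_min u2m]] : exists m, (forall v, Om v -> -1 * v.2 <= -1 * m) /\
    {ae mu, forall t, J t -> (u t).2 = m}.
  by apply: u2_ae_extremal => // t Jt; rewrite mulN1r py_neg.
right; exists m; split; first by move=> v /m_min; rewrite !mulN1r lerN2.
by split => //; exact: vertical_of_u2_ae_cst.
Qed.

(* Conserved because the Hamiltonian does not depend on x. *)
Local Notation first_integral t := (px * x t + y t * py t).

Lemma first_integral_sqr_increment : exists2 L, 0 <= L &
  forall a b, 0 <= a -> a <= b -> b <= T ->
    `|first_integral b - first_integral a| <= L * (b - a) ^+ 2.
Proof.
have [C rC] := extremal_rates_bounded.
have [K [K0 y_lip py_lip]] := extremal_klipschitz.
have C0 : 0 <= C := le_trans (normr_ge0 _) (proj1 (rC 0 J0)).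
exists (K * C + K * C); first by rewrite addr_ge0 // mulr_ge0.
move=> a b a0 ab bT.
have Ja := mem_itv0T a0 (le_trans ab bT).
have Jb := mem_itv0T (le_trans a0 ab) bT.
have -> : first_integral b - first_integral a =
    px * (x b - x a) + py b * (y b - y a) - y a * (- py b - - py a) by ring.
rewrite (primitive_increment xdot_int x_primitive a0 ab bT).
rewrite (primitive_increment ydot_int y_primitive a0 ab bT).
rewrite (primitive_increment pydot_int Npy_primitive a0 ab bT).
have iZ k (f : R -> R) : mu.-integrable `]a, b] (EFin \o f) ->
    mu.-integrable `]a, b] (EFin \o (fun s => k * f s)).
  by move=> fi; have := integrableZl _ k fi; apply.
have i1 := integrable_itv_oc_sub xdot_int a0 bT.
have i2 := integrable_itv_oc_sub ydot_int a0 bT.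
have i3 := integrable_itv_oc_sub pydot_int a0 bT.
rewrite -!RintegralZl // -RintegralD ?iZ // -RintegralB ?iZ //; last first.
  by have := integrableD _ (iZ px _ i1) (iZ (py b) _ i2); apply.
rewrite expr2 mulrA; apply: le_normr_Rintegral_itv_oc => //.
  have := integrableB _ (integrableD _ (iZ px _ i1) (iZ (py b) _ i2)) (iZ (y a) _ i3).
  by apply.
move=> s as_ sb.
have Js := mem_itv0T (le_trans a0 (ltW as_)) (le_trans sb bT).
have [yu2 g] := rC s Js.
(* The rate px y u1 + py y u2 - y (px u1 + py u2) of the first integral
   vanishes, up to the oscillation of y and py on ]a, b]. *)
have -> : px * (y s * (u s).1) + py b * (y s * (u s).2) -
    y a * (px * (u s).1 + py s * (u s).2) =
    (y s - y a) * (px * (u s).1 + py s * (u s).2) +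
    (py b - py s) * (y s * (u s).2) by ring.
apply: (le_trans (ler_normD _ _)).
rewrite (normrM (y s - y a)) (normrM (py b - py s)) mulrDl mulrAC.
apply: lerD; apply: ler_pM => //.
  apply: (le_trans (y_lip (s, a) (conj Js Ja))); rewrite /= ler_wpM2l //.
  by rewrite ger0_norm ?subr_ge0 ?(ltW as_) // lerD2r.
apply: (le_trans (py_lip (b, s) (conj Jb Js))); rewrite /= ler_wpM2l //.
by rewrite ger0_norm ?subr_ge0 // lerD2l lerN2 ltW.
Qed.

Lemma first_integral_cst t : J t -> first_integral t = first_integral 0.
Proof.
have [L L0 QL] := first_integral_sqr_increment.
rewrite /= in_itv /= => /andP[t0 tT].
apply: (@sqr_increment_cst _ 0 t L (fun s => first_integral s) t0 L0).
by move=> a b a0 ab bt; exact: QL a0 ab (le_trans bt tT).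
Qed.

Lemma hamiltonian_klipschitz : exists K, 0 <= K /\
  forall v, Om v -> K.-lipschitz_J (fun t => hamiltonian v t).
Proof.
have [M [M0 OmM yM]] := extremal_bounded.
have [K [K0 y_lip py_lip]] := extremal_klipschitz.
exists (M * (`|px| * K) + M * (M * K + M * K)); split.
  by rewrite addr_ge0 // !mulr_ge0 // addr_ge0 // mulr_ge0.
move=> v Ov [a b] [/= Ja Jb].
have [v1 v2] := OmM v Ov; have [ya _] := yM a Ja; have [_ pyb] := yM b Jb.
have ly := y_lip (a, b) (conj Ja Jb); have lp := py_lip (a, b) (conj Ja Jb).
rewrite /= in ly lp; set d := `|a - b| in ly lp *.
have -> : hamiltonian v a - hamiltonian v b = v.1 * (px * (y a - y b)) +
    v.2 * (y a * (py a - py b) + py b * (y a - y b)) by rewrite /dotp /=; ring.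
have T1 : `|v.1 * (px * (y a - y b))| <= M * (`|px| * (K * d)).
  by rewrite !normrM; apply: ler_pM => //; rewrite ler_wpM2l.
have T2 : `|v.2 * (y a * (py a - py b) + py b * (y a - y b))| <=
    M * (M * (K * d) + M * (K * d)).
  rewrite normrM; apply: ler_pM => //.
  by apply: (le_trans (ler_normD _ _)); rewrite !normrM; apply: lerD; apply: ler_pM.
apply: (le_trans (ler_normD _ _)); apply: (le_trans (lerD T1 T2)).
by rewrite le_eqVlt; apply/orP; left; apply/eqP; ring.
Qed.

Lemma hamiltonian_le t v : J t -> Om v -> hamiltonian v t <= h.
Proof.
move=> Jt Ov; have [K [K0 HK]] := hamiltonian_klipschitz.
rewrite leNgt; apply/negP => hv.
have e0 : 0 < hamiltonian v t - h by rewrite subr_gt0.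
have d0 : 0 < (hamiltonian v t - h) / (K + 1) by rewrite divr_gt0 // ltr_pwDr.
have [t' [Jt' tt' Hle _]] := hamiltonian_max_dense Jt d0.
have : `|hamiltonian v t - hamiltonian v t'| < hamiltonian v t - h.
  by apply: (klipschitz_lt K0 e0 (HK v Ov) Jt Jt'); rewrite distrC.
have := Hle v Ov; have := ler_norm (hamiltonian v t - hamiltonian v t'); lra.
Qed.

Lemma hamiltonian_sup t q : J t -> q < h ->
  exists2 v, Om v & q < hamiltonian v t.
Proof.
move=> Jt qh; have [K [K0 HK]] := hamiltonian_klipschitz.
have e0 : 0 < h - q by rewrite subr_gt0.
have d0 : 0 < (h - q) / (K + 1) by rewrite divr_gt0 // ltr_pwDr.
have [t' [Jt' tt' _ Ht']] := hamiltonian_max_dense Jt d0.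
exists (u t'); first exact: u_in.
have : `|hamiltonian (u t') t' - hamiltonian (u t') t| < h - q.
  exact: (klipschitz_lt K0 e0 (HK _ (u_in Jt')) Jt' Jt tt').
by rewrite ltr_norml Ht' => /andP[_ ?]; lra.
Qed.

Lemma hamiltonian_polar_bd t : J t ->
  bd (polar_set Om) (y t * px / h, y t * py t / h).
Proof.
move=> Jt; have h0 := hamiltonian_gt0.
have dotpE v : dotp (y t * px / h, y t * py t / h) v = hamiltonian v t / h.
  by rewrite /dotp /=; ring.
apply: polar_set_bd => [v Ov | q q1].
  by rewrite dotpE ler_pdivrMr // mul1r hamiltonian_le.
have qh : q * h < h by rewrite gtr_pMl.
have [v Ov qv] := hamiltonian_sup Jt qh.
by exists v => //; rewrite dotpE ltr_pdivlMr.
Qed.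

Lemma horizontal_of_px_neq0 : px != 0 -> horizontal_geodesic Om T x y u.
Proof.
move=> px0; have h0 := hamiltonian_gt0.
have [s [s1 spx]] : exists s : R, (s = 1 \/ s = -1) /\ s * px = `|px|.
  have [px_gt0|px_le0] := ltP 0 px.
    by exists 1; split; [left | rewrite mul1r gtr0_norm].
  by exists (-1); split; [right | rewrite mulN1r ler0_norm].
pose c := x 0 + y 0 * py 0 / px.
have x_c t : J t -> x t - c = - (y t * py t / px).
  move=> Jt; have E := first_integral_cst Jt.
  have -> : x t = (px * x 0 + y 0 * py 0 - y t * py t) / px by rewrite -E; field.
  by rewrite /c; field.
exists s; split => //; exists (h / `|px|), c; split.
  by rewrite divr_gt0 ?normr_gt0.
split.
  move=> t Jt; exists (y t * px / h, y t * py t / h).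
  split; first exact: hamiltonian_polar_bd.
  rewrite /rot90 /= x_c //; congr (_, _); rewrite -spx; case: s1 => ->;
    by field; rewrite px0 andbT gt_eqF.
apply: (@filterS _ _ (ae_filter_ringOfSetsType mu) _ _ _ hamiltonian_max).
move=> t Ht Jt; have [_ Hu] := Ht Jt.
rewrite /cross /= x_c //.
have -> : s * (- (y t * py t / px) * (y t * (u t).2) - y t * (y t * (u t).1)) =
    - (y t * hamiltonian (u t) t / `|px|).
  by rewrite /dotp /= -spx; case: s1 => ->; field.
by rewrite Hu oppr_lt0 divr_gt0 ?normr_gt0 // mulr_gt0 // y_gt0.
Qed.

End Extremal.

Theorem theorem1 (R : realType) (Om : set (R * R)) :
  convex2 Om -> compact Om -> interior Om (0, 0) ->
  forall (T : R) (x y : R -> R) (u : R -> R * R) (px : R) (py : R -> R),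
    pmp_extremal Om T x y u px py ->
    horizontal_geodesic Om T x y u \/
    vertical_up_geodesic Om T x y u \/
    vertical_down_geodesic Om T x y u.
Proof.
move=> _ Om_compact Om_interior0 T x y u px py.
move=> [T_gt0 [y_gt0 [u_in [_ [[xdot_int [ydot_int pydot_int]]
  [x_eq [y_eq [py_eq [p_neq0 [h [_ hamiltonian_max]]]]]]]]]]].
have [px0|px0] := eqVneq px 0.
  by right; apply: (vertical_of_px0 Om_compact T_gt0 y_gt0 u_in xdot_int ydot_int
    pydot_int x_eq y_eq py_eq p_neq0 hamiltonian_max).
by left; apply: (horizontal_of_px_neq0 Om_compact Om_interior0 T_gt0 y_gt0 u_in
  xdot_int ydot_int pydot_int x_eq y_eq py_eq p_neq0 hamiltonian_max).
Qed.
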